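(* Let $R$ be a ring and $n\ge 1$ an integer, and let $R_n$ be the subring of $n\times n$ upper triangular matrices over $R$ whose diagonal entries are all equal, i.e. matrices $(a_{ij})$ with $a_{ij}=0$ for $i>j$, $a_{11}=a_{22}=\dots=a_{nn}$, and arbitrary $a_{ij}\in R$ for $i<j$. Then $R$ is NJ-symmetric if and only if $R_n$ is NJ-symmetric.
   Context: Rings are associative with identity. $N(S)$ is the set of nilpotent elements, $J(S)$ the Jacobson radical of a ring $S$. $S$ is NJ-symmetric if for all $a,b,c\in S$, $abc\in N(S)$ implies $bac\in J(S)$. *)

From HB Require Import structures.
From mathcomp Require Import all_boot all_order all_algebra.
Set Implicit Arguments. Unset Strict Implicit. Unset Printing Implicit Defensive.
Import GRing.Theory.
Local Open Scope ring_scope.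

Definition nilpotent_elt (S : nzRingType) (x : S) : Prop := exists m : nat, x ^+ m = 0.

Definition left_ideal (S : nzRingType) (I : S -> Prop) : Prop :=
  [/\ I 0, (forall x y, I x -> I y -> I (x + y)), (forall x, I x -> I (- x))
    & (forall r x, I x -> I (r * x))].

Definition maximal_left_ideal (S : nzRingType) (I : S -> Prop) : Prop :=
  [/\ left_ideal I, ~ I 1 &
      forall K : S -> Prop, left_ideal K -> (forall x, I x -> K x) ->
        (exists x, K x /\ ~ I x) -> K 1].

Definition jacobson (S : nzRingType) (x : S) : Prop :=
  forall I : S -> Prop, maximal_left_ideal I -> I x.

Definition NJ_symmetric (S : nzRingType) : Prop :=
  forall a b c : S, nilpotent_elt (a * b * c) -> jacobson (b * a * c).

(* R_n (for n = m.+1 >= 1): upper triangular matrices with constant diagonal *)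
Section Rn.
Variables (R : nzRingType) (m : nat).

Definition Rn_pred : pred 'M[R]_m.+1 := fun A =>
  [forall i : 'I_m.+1, forall j : 'I_m.+1, (j < i)%N ==> (A i j == 0)] &&
  [forall i : 'I_m.+1, A i i == A ord0 ord0].

Lemma Rn_predP (A : 'M[R]_m.+1) :
  reflect (((forall i j : 'I_m.+1, (j < i)%N -> A i j = 0) /\
           (forall i : 'I_m.+1, A i i = A ord0 ord0))%type) (A \in Rn_pred).
Proof.
apply: (iffP andP) => [[/forallP H1 /forallP H2]|[H1 H2]]; split.
- by move=> i j ji; have /forallP/(_ j)/implyP/(_ ji)/eqP := H1 i.
- by move=> i; apply/eqP.
- by apply/forallP=> i; apply/forallP=> j; apply/implyP=> ji; apply/eqP/H1.
- by apply/forallP=> i; apply/eqP.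
Qed.

Lemma Rn_mul_low (A B : 'M[R]_m.+1) : A \in Rn_pred -> B \in Rn_pred ->
  forall i j : 'I_m.+1, (j < i)%N -> (A * B) i j = 0.
Proof.
move=> /Rn_predP[A1 _] /Rn_predP[B1 _] i j ji.
rewrite [A * B]/GRing.mul /= mxE big1 // => k _.
case: (ltnP k i) => ki; first by rewrite A1 // mul0r.
by rewrite B1 ?mulr0 //; apply: leq_trans ji ki.
Qed.

Lemma Rn_mul_diag (A B : 'M[R]_m.+1) : A \in Rn_pred -> B \in Rn_pred ->
  forall i : 'I_m.+1, (A * B) i i = A i i * B i i.
Proof.
move=> /Rn_predP[A1 _] /Rn_predP[B1 _] i.
rewrite [A * B]/GRing.mul /= mxE (bigD1 i) //= big1 ?addr0 // => k ki.
case: (ltnP k i) => lki; first by rewrite A1 // mul0r.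
rewrite B1 ?mulr0 //; rewrite ltn_neqAle lki andbT.
by apply/negP => /eqP/val_inj E; move: ki; rewrite E eqxx.
Qed.

Lemma Rn_subring_closed : subring_closed Rn_pred.
Proof.
split.
- apply/Rn_predP; split => [i j ji|i]; rewrite !mxE.
    have /negbTE-> : i != j by apply/negP=> /eqP E; move: ji; rewrite E ltnn.
    by [].
  by rewrite !eqxx.
- move=> A B /Rn_predP[A1 A2] /Rn_predP[B1 B2]; apply/Rn_predP; split.
    by move=> i j ji; rewrite !mxE A1 // B1 // subr0.
  by move=> i; rewrite !mxE A2 B2.
- move=> A B HA HB; apply/Rn_predP; split; first exact: Rn_mul_low.
  by move=> i; rewrite !Rn_mul_diag //; move/Rn_predP: HA => [_ ->];
     move/Rn_predP: HB => [_ ->].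
Qed.

HB.instance Definition _ := GRing.isSubringClosed.Build _ Rn_pred Rn_subring_closed.

Record Rn_type := RnMk { Rn_val :> 'M[R]_m.+1; _ : Rn_val \in Rn_pred }.
HB.instance Definition _ := [isSub for Rn_val].
HB.instance Definition _ := [Choice of Rn_type by <:].
HB.instance Definition _ := [SubChoice_isSubNzRing of Rn_type by <:].
End Rn.

From HB Require Import structures.
From mathcomp Require Import all_boot all_algebra.
From Stdlib Require Import Classical.
Import GRing.Theory.
Local Open Scope ring_scope.

(* Taking the common diagonal entry is a ring morphism R_n -> R, split by the
   scalar matrices, whose kernel consists of strictly upper triangular, hence
   nilpotent, matrices. A nil ideal lies in every maximal left ideal, so along
   a surjective morphism with nil kernel maximal left ideals correspond by
   image and preimage: the Jacobson radical is the preimage of the Jacobson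
   radical, and nilpotency is both preserved and reflected. NJ-symmetry,
   phrased only through N and J, therefore transfers in both directions. *)

Lemma sum_expr_mul1B (S : pzRingType) (x : S) (k : nat) :
  (\sum_(i < k) x ^+ i) * (1 - x) = 1 - x ^+ k.
Proof.
have cx : GRing.comm x (1 - x).
  by apply: commrB; [exact: commr1 | exact: commr_refl].
have -> : GRing.comm (\sum_(i < k) x ^+ i) (1 - x).
  by apply/commr_sym/commr_sum => i _; exact/commrX/commr_sym.
by rewrite -opprB mulNr -subrX1 opprB.
Qed.

Lemma nilpotent_linv_1B (S : nzRingType) (x : S) :
  nilpotent_elt x -> exists y, y * (1 - x) = 1.
Proof.
by case=> k xk0; exists (\sum_(i < k) x ^+ i); rewrite sum_expr_mul1B xk0 subr0.
Qed.

Lemma strict_upper_expr (R : pzRingType) (m : nat) (Y : 'M[R]_m) :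
  (forall i j : 'I_m, (j <= i)%N -> Y i j = 0) ->
  forall k (i j : 'I_m), (j < i + k)%N -> (Y ^+ k) i j = 0.
Proof.
move=> Ylow; elim=> [|k IHk] i j; rewrite ?addn0 => ltji.
  by rewrite expr0 mxE; case: eqP => // eqij; rewrite eqij ltnn in ltji.
rewrite exprSr -mulmxE mxE big1 // => l _.
have [ltl|lel] := ltnP l (i + k); first by rewrite IHk ?mul0r.
by rewrite Ylow ?mulr0 // -ltnS (leq_trans ltji) // addnS ltnS.
Qed.

Lemma strict_upper_mx_nilpotent (R : pzRingType) (m : nat) (Y : 'M[R]_m) :
  (forall i j : 'I_m, (j <= i)%N -> Y i j = 0) -> Y ^+ m = 0.
Proof.
move=> Ylow; apply/matrixP => i j; rewrite mxE strict_upper_expr //.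
by rewrite (leq_trans (ltn_ord j)) ?leq_addl.
Qed.

Definition image_pred {S R : Type} (f : S -> R) (M : S -> Prop) (r : R) : Prop :=
  exists2 x, M x & f x = r.

Section NilKernelRmorphism.
Context {S R : nzRingType} {f : {rmorphism S -> R}} {g : R -> S}.
Hypothesis fK : cancel g f.
Hypothesis ker_nil : forall x, f x = 0 -> nilpotent_elt x.

Lemma left_ideal_preim (I : R -> Prop) : left_ideal I -> left_ideal (I \o f).
Proof.
case=> I0 ID IN IM; split=> /= [|x y|x|r x];
  rewrite ?rmorph0 ?rmorphD ?rmorphN ?rmorphM //.
- exact: ID.
- exact: IN.
- exact: IM.
Qed.

Lemma left_ideal_image (M : S -> Prop) :
  left_ideal M -> left_ideal (image_pred f M).
Proof.
case=> M0 MD MN MM; split.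
- by exists 0; rewrite ?rmorph0.
- move=> _ _ [x Mx <-] [y My <-].
  by exists (x + y); rewrite ?rmorphD //; apply: MD.
- by move=> _ [x Mx <-]; exists (- x); rewrite ?rmorphN //; apply: MN.
- by move=> r _ [x Mx <-]; exists (g r * x); rewrite ?rmorphM ?fK //; apply: MM.
Qed.

Lemma maximal_left_ideal_preim (I : R -> Prop) :
  maximal_left_ideal I -> maximal_left_ideal (I \o f).
Proof.
case=> Iideal nI1 Imax; split=> /=; rewrite ?rmorph1 //.
  exact: left_ideal_preim.
move=> K Kideal IK [x [Kx nIx]].
have [_ KD _ _] := Kideal.
have ker_K y : f y = 0 -> K y.
  by move=> fy0; apply: IK; rewrite /= fy0; case: Iideal.
have [y Ky fy1] : image_pred f K 1.
  apply: Imax; first exact: left_ideal_image.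
  - by move=> r Ir; exists (g r); rewrite ?fK //; apply: IK; rewrite /= fK.
  - by exists (f x); split=> //; exists x.
rewrite -(subrK y 1); apply: KD => //.
by apply: ker_K; rewrite rmorphB rmorph1 fy1 subrr.
Qed.

Lemma ker_sub_maximal_left_ideal (M : S -> Prop) :
  maximal_left_ideal M -> forall x, f x = 0 -> M x.
Proof.
case=> [[M0 MD MN MM] nM1 Mmax] a fa0; apply: NNPP => nMa; apply: nM1.
(* Otherwise M + S a = S, so 1 - y a lies in M for some y; y a is in the
   nil kernel, hence 1 - y a is left invertible. *)
pose K x := exists m y, M m /\ x = m + y * a.
have [m [y [Mm def1]]] : K 1.
  apply: Mmax.
  - split.
    + by exists 0, 0; rewrite mul0r addr0.
    + move=> _ _ [m1 [y1 [Mm1 ->]]] [m2 [y2 [Mm2 ->]]].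
      exists (m1 + m2), (y1 + y2); rewrite mulrDl addrACA.
      by split=> //; apply: MD.
    + move=> _ [m1 [y1 [Mm1 ->]]].
      by exists (- m1), (- y1); rewrite opprD mulNr; split=> //; apply: MN.
    + move=> r _ [m1 [y1 [Mm1 ->]]].
      by exists (r * m1), (r * y1); rewrite mulrDr mulrA; split=> //; apply: MM.
  - by move=> x Mx; exists x, 0; rewrite mul0r addr0.
  - by exists a; split=> //; exists 0, 1; rewrite mul1r add0r.
have [z z1B] : exists z, z * (1 - y * a) = 1.
  by apply/nilpotent_linv_1B/ker_nil; rewrite rmorphM fa0 mulr0.
by rewrite -z1B def1 addrK; apply: MM.
Qed.

Lemma maximal_left_ideal_imageE (M : S -> Prop) :
  maximal_left_ideal M -> forall x, image_pred f M (f x) <-> M x.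
Proof.
move=> Mmax x; split=> [[y My fyx]|]; last by exists x.
have [[_ MD _ _] _ _] := Mmax.
rewrite -(subrK y x); apply: MD => //; apply: ker_sub_maximal_left_ideal => //.
by rewrite rmorphB fyx subrr.
Qed.

Lemma maximal_left_ideal_image (M : S -> Prop) :
  maximal_left_ideal M -> maximal_left_ideal (image_pred f M).
Proof.
move=> Mmax; have [Mideal nM1 Mmax'] := Mmax.
split; first exact: left_ideal_image.
  by rewrite -(rmorph1 f) maximal_left_ideal_imageE.
move=> K Kideal MK [r [Kr nMr]].
rewrite -(rmorph1 f); apply: (Mmax' (K \o f)); first exact: left_ideal_preim.
- by move=> x Mx; apply: MK; exists x.
- by exists (g r); split; rewrite /= ?fK // -maximal_left_ideal_imageE // fK.
Qed.

Lemma jacobson_rmorph x : jacobson x <-> jacobson (f x).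
Proof.
split=> [Jx I /maximal_left_ideal_preim Imax|Jfx M Mmax]; first exact: Jx _ Imax.
rewrite -(maximal_left_ideal_imageE _ Mmax).
exact: Jfx _ (maximal_left_ideal_image _ Mmax).
Qed.

Lemma nilpotent_rmorph x : nilpotent_elt x <-> nilpotent_elt (f x).
Proof.
split=> [[k xk0]|[k fxk0]]; first by exists k; rewrite -rmorphXn xk0 rmorph0.
have [l xkl0] : nilpotent_elt (x ^+ k) by apply: ker_nil; rewrite rmorphXn.
by exists (k * l)%N; rewrite exprM.
Qed.

Lemma NJ_symmetric_rmorph : NJ_symmetric S <-> NJ_symmetric R.
Proof.
split=> NJ a b c.
  rewrite -[a]fK -[b]fK -[c]fK -!rmorphM -nilpotent_rmorph -jacobson_rmorph.
  exact: NJ.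
by rewrite nilpotent_rmorph jacobson_rmorph !rmorphM; apply: NJ.
Qed.

End NilKernelRmorphism.

Section UpperTriangularConstantDiagonal.
Variables (R : nzRingType) (n : nat).

Definition Rn_diag (A : Rn_type R n) : R := val A ord0 ord0.

Lemma Rn_diag_is_nmod_morphism : nmod_morphism Rn_diag.
Proof. by split=> [|A B]; rewrite /Rn_diag ?raddf0 ?raddfD mxE. Qed.

Lemma Rn_diag_is_monoid_morphism : monoid_morphism Rn_diag.
Proof.
split=> [|A B]; first by rewrite /Rn_diag rmorph1 mxE.
by rewrite /Rn_diag rmorphM Rn_mul_diag //; apply: valP.
Qed.

HB.instance Definition _ :=
  GRing.isNmodMorphism.Build _ _ Rn_diag Rn_diag_is_nmod_morphism.
HB.instance Definition _ :=
  GRing.isMonoidMorphism.Build _ _ Rn_diag Rn_diag_is_monoid_morphism.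

Lemma scalar_mx_Rn (r : R) : (r%:M : 'M[R]_n.+1) \in @Rn_pred R n.
Proof.
apply/Rn_predP; split=> [i j ltji|i]; rewrite !mxE ?eqxx //.
by case: eqP => // eqij; rewrite eqij ltnn in ltji.
Qed.

Definition Rn_scalar (r : R) : Rn_type R n := RnMk (scalar_mx_Rn r).

Lemma Rn_scalarK : cancel Rn_scalar Rn_diag.
Proof. by move=> r; rewrite /Rn_diag /= mxE eqxx. Qed.

Lemma Rn_diag_ker_nilpotent (A : Rn_type R n) :
  Rn_diag A = 0 -> nilpotent_elt A.
Proof.
move=> A00; exists n.+1; apply: val_inj; rewrite rmorphXn raddf0.
have /Rn_predP[Alow Adiag] := valP A.
apply: strict_upper_mx_nilpotent => i j.
rewrite leq_eqVlt => /orP[/eqP eqji|]; last exact: Alow.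
by rewrite (val_inj eqji) Adiag.
Qed.

End UpperTriangularConstantDiagonal.

Theorem proposition2p25 (R : nzRingType) (n : nat) :
  NJ_symmetric R <-> NJ_symmetric (Rn_type R n).
Proof.
exact: iff_sym (NJ_symmetric_rmorph (Rn_scalarK R n) (Rn_diag_ker_nilpotent R n)).
Qed.
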